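(* Let $q$ be odd, $q\ne9$, and $V$ an $n$-dimensional space ($n\ge4$) over $\mathbb{F}_q$ with a non-degenerate alternating form $f$, $G=\mathrm{Sp}(V)$ and $\mathcal T$ the set of transvections of $G$. Let $X\subseteq G$ be a generating set of $G$ consisting of $1$ and transvections, which is $\mathbb{F}_q$-closed, such that ${}_VX$ spans $V$, $X_{V^*}$ spans $V^*$, $\Gamma(X)$ is strongly connected, and the directed diameter of $\Gamma(X'')$ is at most $2$ for every $X\setminus\{1\}\subseteq X''\subseteq\mathcal T$. Let $c\ge1$ be an absolute constant such that for every such $V,X$ and all nonzero $a,b\in V$ with $T_a\cup T_b\subseteq X$ and $a+b\ne0$ one has $\ell_X(T_{a+b})\le c$ (such a constant exists). Then $\ell_X(\mathcal T)\le c\,n^{\log_2 c}$. Moreover, $\ell_X(\mathcal T)\le 21n^{4.4}$.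
   Context: Transvections $s=1+u\otimes\phi$ ($x\mapsto x+\phi(x)u$, $\phi(u)=0$); $s^\lambda=1+\lambda u\otimes\phi$; $X$ is $\mathbb{F}_q$-closed if $s^\lambda\in X$ for all $s\in X$, $\lambda\in\mathbb{F}_q^\times$. ${}_VX$, $X_{V^*}$: the sets of $u$, resp. $\phi$, occurring in elements of $X$. $\Gamma(Y)$: directed graph on $Y$ with an edge from $1+u\otimes\phi$ to $1+v\otimes\psi$ iff $\psi(u)\ne0$. For $0\ne v\in V$, $\varphi_v(x)=f(v,x)$ and $T_v=\{1+\lambda v\otimes\varphi_v:\lambda\in\mathbb{F}_q\}$. $\ell_X(Y)=\min\{k:Y\subseteq(X\cup X^{-1}\cup\{1\})^k\}$. *)

From Stdlib Require Import Reals.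
From HB Require Import structures.
From mathcomp Require Import all_boot all_order all_algebra all_fingroup all_field.
Set Implicit Arguments. Unset Strict Implicit. Unset Printing Implicit Defensive.
Import GRing.Theory.
Local Open Scope ring_scope.

Section Symp.
Variables (F : finFieldType) (n : nat).

(* V = 'rV[F]_n (row vectors); linear maps act on the right: x |-> x *m g.
   The bilinear form is f(x,y) = x J y^T for a matrix J. *)
Definition formv (J : 'M[F]_n) (x y : 'rV[F]_n) : F := (x *m J *m y^T) 0 0.

Definition alt_nondeg (J : 'M[F]_n) : Prop :=
  (forall x : 'rV[F]_n, formv J x x = 0) /\ J \in unitmx.

Definition Sp (J : 'M[F]_n) : {set 'M[F]_n} :=
  [set g : 'M[F]_n | (g \in unitmx) && (g *m J *m g^T == J)].

(* s = 1 + u (x) phi : x |-> x + phi(x) u, with u <> 0, phi <> 0, phi(u) = 0.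
   A linear functional phi in V^* is represented by a column vector:
   phi(x) = (x *m phi) 0 0. *)
Definition transv_rep (s : 'M[F]_n) (u : 'rV[F]_n) (phi : 'cV[F]_n) : bool :=
  [&& u != 0, phi != 0, u *m phi == 0 & s == 1%:M + phi *m u].

Definition is_transv (s : 'M[F]_n) : bool :=
  [exists u, exists phi, transv_rep s u phi].

Definition transvs (J : 'M[F]_n) : {set 'M[F]_n} :=
  [set s in Sp J | is_transv s].

Definition Fq_closed (X : {set 'M[F]_n}) : Prop :=
  forall s, s \in X -> forall lam : F, lam != 0 -> 1%:M + lam *: (s - 1%:M) \in X.

Definition VX (X : {set 'M[F]_n}) : {set 'rV[F]_n} :=
  [set u | [exists s in X, exists phi, transv_rep s u phi]].
Definition XVs (X : {set 'M[F]_n}) : {set 'cV[F]_n} :=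
  [set phi | [exists s in X, exists u, transv_rep s u phi]].

Definition spans_rV (A : {set 'rV[F]_n}) : Prop :=
  forall v : 'rV[F]_n, exists c : 'rV[F]_n -> F, v = \sum_(u in A) c u *: u.
Definition spans_cV (A : {set 'cV[F]_n}) : Prop :=
  forall v : 'cV[F]_n, exists c : 'cV[F]_n -> F, v = \sum_(u in A) c u *: u.

Definition gedge (s t : 'M[F]_n) : bool :=
  [exists u, exists phi, exists v, exists psi,
     [&& transv_rep s u phi, transv_rep t v psi & u *m psi != 0]].

Definition Gamma (Y : {set 'M[F]_n}) : rel 'M[F]_n :=
  [rel s t | [&& s \in Y, t \in Y & gedge s t]].

Definition strongly_connected (Y : {set 'M[F]_n}) : Prop :=
  forall s t, s \in Y -> t \in Y -> connect (Gamma Y) s t.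

Definition diam_le2 (Y : {set 'M[F]_n}) : Prop :=
  forall s t, s \in Y -> t \in Y ->
    [|| s == t, gedge s t | [exists w in Y, gedge s w && gedge w t]].

Fixpoint setpow (S : {set 'M[F]_n}) (k : nat) : {set 'M[F]_n} :=
  match k with
  | 0 => [set 1%:M]
  | k'.+1 => [set a *m b | a in setpow S k', b in S]
  end.

Definition symm1 (X : {set 'M[F]_n}) : {set 'M[F]_n} :=
  X :|: [set invmx x | x in X] :|: [set 1%:M].

(* X generates G (G finite, so the generated group is the union of the
   powers of X cup X^{-1} cup {1}) *)
Definition generates (J : 'M[F]_n) (X : {set 'M[F]_n}) : Prop :=
  X \subset Sp J /\ forall g, g \in Sp J -> exists k, g \in setpow (symm1 X) k.

Definition ell_le (X Y : {set 'M[F]_n}) (r : R) : Prop :=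
  exists k : nat, Rle (INR k) r /\ Y \subset setpow (symm1 X) k.

(* T_v = {1 + lambda v (x) phi_v}, phi_v(x) = f(v,x) = x J^T v^T *)
Definition Tv (J : 'M[F]_n) (v : 'rV[F]_n) : {set 'M[F]_n} :=
  [set 1%:M + lam *: ((J^T *m v^T) *m v) | lam : F].

Definition good_setup (J : 'M[F]_n) (X : {set 'M[F]_n}) : Prop :=
  [/\ odd #|F|, #|F| <> 9%N, (4 <= n)%N & alt_nondeg J] /\
  [/\ generates J X, 1%:M \in X, X :\ 1%:M \subset transvs J & Fq_closed X] /\
  [/\ spans_rV (VX X), spans_cV (XVs X), strongly_connected (X :\ 1%:M) &
      forall X'' : {set 'M[F]_n}, X :\ 1%:M \subset X'' -> X'' \subset transvs J ->
        diam_le2 X''].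

End Symp.

(* Every transvection lies in some T_u, and since the vectors occurring in X span V,
   u is a sum of at most n linearly independent vectors v with T_v contained in X.
   Adjoining T_v and T_w to X preserves all the standing hypotheses, so if T_v and T_w
   have length at most m over X then T_(v+w) has length at most c m.  Halving the sum
   repeatedly gives l_X(T_u) <= c^j with j = ceil(log2 n), and c^j <= c n^(log2 c).
   For the explicit bound take c = 19: for symplectic g, T_(a g) = g^-1 T_a g, and a path
   of length at most 2 in Gamma yields a product g of at most three elements of T_b and
   T_w with a g = a + b; when the first path found does not suffice, a second one in
   Gamma(X \ 1 u T_(a+b)) and the splitting a + b = 2a + (b - a) (q odd) do.  Finally
   19 n^(log2 19) <= 21 n^4.4. *)

From Stdlib Require Import Reals ZArith Lra Lia.
From mathcomp Require Import all_boot all_order all_algebra all_fingroup all_field.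
Set Implicit Arguments. Unset Strict Implicit. Unset Printing Implicit Defensive.
Import GRing.Theory.
Local Open Scope ring_scope.

Section RealBounds.
Local Open Scope R_scope.

Lemma INR_expn (m k : nat) : INR (m ^ k)%N = INR m ^ k.
Proof. by elim: k => //= k IH; rewrite expnS -multE mult_INR IH. Qed.

Lemma ln_le x y : 0 < x -> x <= y -> ln x <= ln y.
Proof. by move=> x0 xy; apply: Rnot_lt_le => /ln_lt_inv; lra. Qed.

Lemma nat_floor (c : R) : 0 <= c ->
  exists K : nat, INR K <= c /\ forall k, INR k <= c -> (k <= K)%N.
Proof.
move=> c0; have [c_lt_up up_le] := archimed c.
have up_gt0 : Z.lt 0 (up c) by apply: lt_IZR; lra.
exists (Z.to_nat (up c - 1)); split => [|k kc].
  rewrite INR_IZR_INZ Z2Nat.id; last by lia.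
  by rewrite minus_IZR; lra.
have k_lt_up : Z.lt (Z.of_nat k) (up c) by apply: lt_IZR; rewrite -INR_IZR_INZ; lra.
by apply/leP; lia.
Qed.

Lemma INR_expn_le_Rpower (K j n : nat) (c : R) :
  INR K <= c -> 1 <= c -> (0 < j)%N -> (2 ^ j.-1 <= n)%N ->
  INR (K ^ j)%N <= c * Rpower (INR n) (ln c / ln (INR 2)).
Proof.
move=> Kc c1 j0 hn; rewrite (_ : INR 2 = 2) //.
have ln2_gt0 : 0 < ln 2 by rewrite -ln_1; apply: ln_increasing; lra.
have pow2_le_n : 2 ^ j.-1 <= INR n.
  by rewrite (_ : 2 = INR 2) // -INR_expn; apply/le_INR/leP.
have j_le_log : INR j.-1 <= ln (INR n) / ln 2.
  apply: (Rmult_le_reg_r (ln 2)) => //.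
  rewrite /Rdiv Rmult_assoc Rinv_l ?Rmult_1_r -?ln_pow; [|lra|lra].
  by apply: ln_le => //; apply: pow_lt; lra.
have -> : Rpower (INR n) (ln c / ln 2) = Rpower c (ln (INR n) / ln 2).
  by rewrite /Rpower; congr exp; rewrite /Rdiv; ring.
rewrite INR_expn -(prednK j0) /=.
apply: Rmult_le_compat; [exact: pos_INR | exact: pow_le (pos_INR K) | by [] |].
apply: Rle_trans (Rle_Rpower _ _ _ c1 j_le_log).
rewrite Rpower_pow; last by lra.
by apply: pow_incr; split; [exact: pos_INR|].
Qed.

Lemma Rpower_log2_19_le (n : nat) : (0 < n)%N ->
  INR 19 * Rpower (INR n) (ln (INR 19) / ln (INR 2)) <=
  INR 21 * Rpower (INR n) (INR 44 / INR 10).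
Proof.
move=> n0; have n1 : 1 <= INR n by apply/(le_INR 1)/leP.
have e44 : INR 44 = 44 := INR_IZR_INZ 44.
have e10 : INR 10 = 10 := INR_IZR_INZ 10.
rewrite e44 e10 (INR_IZR_INZ 19 : INR 19 = 19) (INR_IZR_INZ 21 : INR 21 = 21).
rewrite (INR_IZR_INZ 2 : INR 2 = 2).
have ln2_gt0 : 0 < ln 2 by rewrite -ln_1; apply: ln_increasing; lra.
have ln19_le : 10 * ln 19 <= 44 * ln 2.
  rewrite -e10 -e44 -!ln_pow; [|lra|lra].
  apply: ln_le; first by apply: pow_lt; lra.
  by rewrite !pow_IZR; apply: IZR_le.
have exp_le : ln 19 / ln 2 <= 44 / 10.
  apply: (Rmult_le_reg_r (10 * ln 2)); first lra.
  rewrite (_ : ln 19 / ln 2 * (10 * ln 2) = 10 * ln 19); last by field; lra.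
  by rewrite (_ : 44 / 10 * (10 * ln 2) = 44 * ln 2); last by field.
apply: Rmult_le_compat; [lra | by left; apply: exp_pos | lra | exact: Rle_Rpower].
Qed.

End RealBounds.

Lemma ell_le_trans (F : finFieldType) (n : nat) (X Y : {set 'M[F]_n}) (r1 r2 : R) :
  ell_le X Y r1 -> Rle r1 r2 -> ell_le X Y r2.
Proof. by move=> [k [k_le_r1 Y_sub]] r12; exists k; split=> //; apply: Rle_trans r12. Qed.

Section Setpow.
Variables (F : finFieldType) (n : nat).
Implicit Types (S T X Y : {set 'M[F]_n}) (x y : 'M[F]_n).

Lemma setpow1 S : setpow S 1 = S.
Proof.
apply/setP => x; apply/imset2P/idP => [[u y /set1P -> y_in ->]|x_in].
  by rewrite mul1mx.
by exists 1%:M x; rewrite ?set11 ?mul1mx.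
Qed.

Lemma mem_setpowD S m k x y :
  x \in setpow S m -> y \in setpow S k -> x *m y \in setpow S (m + k).
Proof.
elim: k y => [|k IH] y x_in; first by move/set1P ->; rewrite mulmx1 addn0.
case/imset2P => y1 y2 y1_in y2_in ->; rewrite addnS mulmxA.
by apply/imset2P; exists (x *m y1) y2 => //; apply: IH.
Qed.

Lemma one_setpow S k : 1%:M \in S -> 1%:M \in setpow S k.
Proof.
move=> S1; elim: k => [|k IH]; first exact: set11.
by rewrite -[1%:M]mulmx1 -addn1; apply: mem_setpowD; rewrite ?setpow1.
Qed.

Lemma setpow_leq S m k : 1%:M \in S -> (m <= k)%N -> setpow S m \subset setpow S k.
Proof.
move=> S1 /subnK <-; apply/subsetP => x x_in.
by rewrite addnC -[x]mulmx1; apply: mem_setpowD => //; apply: one_setpow.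
Qed.

Lemma setpowM S T r k : S \subset setpow T r -> setpow S k \subset setpow T (k * r).
Proof.
move=> ST; elim: k => [|k IH]; first by rewrite mul0n.
apply/subsetP => _ /imset2P[x y x_in y_in ->].
by rewrite mulSn addnC; apply: mem_setpowD; [apply: (subsetP IH) | apply: (subsetP ST)].
Qed.

Lemma setpowS S T k : S \subset T -> setpow S k \subset setpow T k.
Proof. by rewrite -{2}[k]muln1 -{1}(setpow1 T); apply: setpowM. Qed.

Lemma symm1_id X : 1%:M \in symm1 X.
Proof. by rewrite !inE eqxx orbT. Qed.

Lemma sub_symm1 X : X \subset symm1 X.
Proof. by apply/subsetP => x x_in; rewrite !inE x_in. Qed.

Lemma symm1S X Y : X \subset Y -> symm1 X \subset symm1 Y.
Proof. by move=> XY; apply/setSU/setUSS/imsetS. Qed.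

Lemma symm1U_setpow X T r : (0 < r)%N ->
  T \subset setpow (symm1 X) r -> [set invmx x | x in T] \subset T ->
  symm1 (X :|: T) \subset setpow (symm1 X) r.
Proof.
move=> r_gt0 T_sub T_inv; have XS1 := setpow_leq (symm1_id X) r_gt0.
rewrite setpow1 in XS1.
rewrite /symm1 imsetU !subUset T_sub (subset_trans T_inv T_sub) andbT.
rewrite !(subset_trans _ XS1) ?sub_symm1 //; first by rewrite sub1set symm1_id.
by apply/subsetP => _ /imsetP[x x_in ->]; rewrite !inE imset_f ?orbT.
Qed.

End Setpow.

Section FreeSeq.
Variables (K : fieldType) (vT : vectType K).
Implicit Types (L Y s : seq vT).

Lemma exists_free_span L : exists Y, [/\ free Y, {subset Y <= L} & (<<L>> <= <<Y>>)%VS].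
Proof.
elim: L => [|x L [Y [freeY YL LY]]]; first by exists [::]; rewrite nil_free.
have [xY|xNY] := boolP (x \in <<Y>>)%VS.
  exists Y; split=> // [y /YL|]; first by rewrite inE orbC => ->.
  by rewrite span_cons subv_add -memvE xY.
exists (x :: Y); split; first by rewrite free_cons xNY.
  by move=> y; rewrite !inE => /orP[->|/YL ->]; rewrite ?orbT.
by rewrite !span_cons addvS.
Qed.

Lemma sum_free_neq0 s : free s -> s != [::] -> \sum_(w <- s) w != 0.
Proof.
case: s => [//|v s]; rewrite free_cons big_cons => /andP[vNs _] _.
apply: contra vNs; rewrite addr_eq0 => /eqP ->; rewrite memvN big_seq.
by apply: memv_suml => w w_in; apply: memv_span.
Qed.

Lemma free_map_scale (k : vT -> K) Y : free Y -> {in Y, forall x, k x != 0} ->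
  free [seq k x *: x | x <- Y].
Proof.
elim: Y => [|x Y IH] /=; first by rewrite nil_free.
rewrite !free_cons => /andP[xNY freeY] k_nz.
rewrite IH ?andbT //; last by move=> y y_in; apply: k_nz; rewrite inE y_in orbT.
apply: contra xNY => kx_in.
have span_sub : (<<[seq k y *: y | y <- Y]>> <= <<Y>>)%VS.
  by apply/span_subvP => _ /mapP[y y_in ->]; apply/memvZ/memv_span.
by rewrite -[x](scalerK (k_nz x (mem_head x Y))) memvZ // (subvP span_sub).
Qed.

End FreeSeq.

Section OuterProduct.
Variables (F : fieldType) (n : nat).
Implicit Types (p q : 'cV[F]_n) (u v : 'rV[F]_n).

Lemma mx_neq0_entry m k (A : 'M[F]_(m, k)) : A != 0 -> exists i j, A i j != 0.
Proof.
move=> A_neq0; have : ~~ [forall i, forall j, A i j == 0].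
  apply: contra A_neq0 => /forallP A0; apply/eqP/matrixP => i j; rewrite mxE.
  exact/eqP/(forallP (A0 i)).
by rewrite negb_forall => /existsP[i]; rewrite negb_forall => /existsP[j]; exists i, j.
Qed.

Lemma outer_entry p u i j : (p *m u) i j = p i 0 * u 0 j.
Proof. by rewrite mxE big_ord1. Qed.

Lemma outer_neq0 p u : p != 0 -> u != 0 -> p *m u != 0.
Proof.
move=> /mx_neq0_entry[i [x pi]] /mx_neq0_entry[y [j uj]].
rewrite (ord1 x) in pi; rewrite (ord1 y) in uj.
apply/eqP => /matrixP /(_ i j); rewrite outer_entry mxE => /eqP.
by rewrite mulf_eq0 (negbTE pi) (negbTE uj).
Qed.

Lemma outer_eq_row p q u v : p != 0 -> p *m u = q *m v -> exists k, u = k *: v.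
Proof.
move=> /mx_neq0_entry[i [x pi]] e; rewrite (ord1 x) in pi.
exists (q i 0 / p i 0); apply/matrixP => y j; rewrite (ord1 y) mxE.
move/matrixP: e => /(_ i j); rewrite !outer_entry => e.
by apply: (mulfI pi); rewrite e mulrA [p i 0 * _]mulrCA mulfV // mulr1.
Qed.

Lemma outer_eq_col p q u v : u != 0 -> p *m u = q *m v -> exists k, p = k *: q.
Proof.
move=> u_neq0 /(congr1 trmx); rewrite !trmx_mul => e.
have [|k /(congr1 trmx)] := outer_eq_row _ e; first by rewrite trmx_eq0.
by rewrite linearZ /= !trmxK; exists k.
Qed.

End OuterProduct.

Section Form.
Variables (F : finFieldType) (n : nat) (J : 'M[F]_n).
Implicit Types x y z : 'rV[F]_n.
Local Notation f := (formv J).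

Lemma formvDl x y z : f (x + y) z = f x z + f y z.
Proof. by rewrite /formv !mulmxDl mxE. Qed.

Lemma formvDr x y z : f x (y + z) = f x y + f x z.
Proof. by rewrite /formv linearD /= mulmxDr mxE. Qed.

Lemma formvZl c x y : f (c *: x) y = c * f x y.
Proof. by rewrite /formv -!scalemxAl mxE. Qed.

Lemma formvZr c x y : f x (c *: y) = c * f x y.
Proof. by rewrite /formv linearZ /= -scalemxAr mxE. Qed.

Lemma formvNl x y : f (- x) y = - f x y.
Proof. by rewrite -scaleN1r formvZl mulN1r. Qed.

Lemma formvNr x y : f x (- y) = - f x y.
Proof. by rewrite -scaleN1r formvZr mulN1r. Qed.

Lemma formv_trmx x y : x *m J^T *m y^T = (f y x)%:M.
Proof.
have tr11 (A : 'M[F]_1) : A 0 0 = A^T 0 0 by rewrite mxE.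
by rewrite [LHS]mx11_scalar tr11 !trmx_mul !trmxK mulmxA.
Qed.

Hypothesis J_alt : forall x, f x x = 0.

Lemma formv_anti x y : f x y = - f y x.
Proof.
apply/eqP; rewrite -addr_eq0; have := J_alt (x + y).
by rewrite formvDl !formvDr !J_alt add0r addr0 => ->.
Qed.

Lemma formv_eq0C x y : (f x y == 0) = (f y x == 0).
Proof. by rewrite formv_anti oppr_eq0. Qed.

Lemma trmx_alt : J^T = - J.
Proof.
have entry i j : J i j = f (delta_mx 0 i) (delta_mx 0 j).
  by rewrite /formv -rowE trmx_delta -colE !mxE.
by apply/matrixP => i j; rewrite !mxE !entry formv_anti.
Qed.

End Form.

Section Transvection.
Variables (F : finFieldType) (n : nat) (J : 'M[F]_n).
Implicit Types (u v x : 'rV[F]_n) (g h s t : 'M[F]_n).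
Local Notation f := (formv J).

(* [phiv v] is the column representing phi_v = f(v, -), so that [transv v l] is the
   paper's 1 + l v (x) phi_v and [Tv J v] is the set of all [transv v l]. *)
Definition phiv v : 'cV[F]_n := J^T *m v^T.
Definition transv v (l : F) : 'M[F]_n := 1%:M + l *: (phiv v *m v).

Lemma mulmx_phiv x v : x *m phiv v = (f v x)%:M.
Proof. by rewrite mulmxA formv_trmx. Qed.

Lemma mulmx_transv x v l : x *m transv v l = x + (l * f v x) *: v.
Proof. by rewrite mulmxDr mulmx1 -scalemxAr mulmxA mulmx_phiv mul_scalar_mx scalerA. Qed.

Lemma Tv_transv v l : transv v l \in Tv J v.
Proof. by apply/imsetP; exists l. Qed.

Lemma TvP v t : reflect (exists l, t = transv v l) (t \in Tv J v).
Proof. by apply: (iffP imsetP) => [[l _ ->]|[l ->]]; exists l. Qed.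

Lemma transv0 v : transv v 0 = 1%:M.
Proof. by rewrite /transv scale0r addr0. Qed.

Lemma SpM g h : g \in Sp J -> h \in Sp J -> g *m h \in Sp J.
Proof.
rewrite !inE => /andP[gU /eqP gJ] /andP[hU /eqP hJ].
rewrite unitmx_mul gU hU trmx_mul; apply/eqP.
suff -> : g *m h *m J *m (h^T *m g^T) = g *m (h *m J *m h^T) *m g^T by rewrite hJ.
by rewrite !mulmxA.
Qed.

Lemma conj_transv g h v l : g \in Sp J -> h *m g = 1%:M ->
  h *m transv v l *m g = transv (v *m g) l.
Proof.
rewrite inE => /andP[_ /eqP gJ] hg.
have gJT : g *m J^T *m g^T = J^T.
  by rewrite -[in RHS]gJ !trmx_mul trmxK mulmxA.
have hJ : h *m J^T = J^T *m g^T by rewrite -{1}gJT !mulmxA hg mul1mx.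
rewrite /transv mulmxDr mulmxDl mulmx1 hg -scalemxAr -scalemxAl.
by rewrite /phiv !mulmxA hJ trmx_mul !mulmxA.
Qed.

Hypothesis J_alt : forall x, f x x = 0.

Lemma phivK v : v *m phiv v = 0.
Proof. by rewrite mulmx_phiv J_alt raddf0. Qed.

Lemma transvD v a b : transv v a *m transv v b = transv v (a + b).
Proof.
have N2 : phiv v *m v *m (phiv v *m v) = 0.
  by rewrite mulmxA -(mulmxA (phiv v)) phivK mulmx0 mul0mx.
rewrite /transv mulmxDl !mulmxDr !mul1mx mulmx1 -scalemxAl -scalemxAr N2.
by rewrite !scaler0 addr0 scalerDl -addrA (addrC (b *: _)).
Qed.

Lemma transvKN v a : transv v a *m transv v (- a) = 1%:M.
Proof. by rewrite transvD subrr transv0. Qed.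

Lemma transvNK v a : transv v (- a) *m transv v a = 1%:M.
Proof. by rewrite transvD addNr transv0. Qed.

Lemma invmx_transv v a : invmx (transv v a) = transv v (- a).
Proof.
have [aU _] := mulmx1_unit (transvKN v a).
by rewrite -[invmx _]mulmx1 -(transvKN v a) mulmxA mulVmx ?mul1mx.
Qed.

Lemma invmx_Tv v : [set invmx t | t in Tv J v] \subset Tv J v.
Proof. by apply/subsetP => _ /imsetP[_ /TvP[l ->] ->]; rewrite invmx_transv Tv_transv. Qed.

Lemma transvZ c v l : transv (c *: v) l = transv v (l * c ^+ 2).
Proof.
rewrite /transv /phiv !linearZ /= -scalemxAl !scalerA.
by congr (_ + _ *: _); rewrite mulrAC mulrC expr2.
Qed.

Lemma Tv_scale c v : c != 0 -> Tv J (c *: v) = Tv J v.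
Proof.
move=> c0; apply/setP => t; apply/TvP/TvP => [[l ->]|[l ->]].
  by exists (l * c ^+ 2); rewrite transvZ.
by exists (l / c ^+ 2); rewrite transvZ mulfVK // expf_neq0.
Qed.

Lemma form_one_add_outer phi u :
  (1%:M + phi *m u) *m J *m (1%:M + phi *m u)^T = J + (phi *m (phiv u)^T - phiv u *m phi^T).
Proof.
have uJ : u *m J = (phiv u)^T by rewrite /phiv trmx_mul !trmxK.
have Ju : J *m u^T = - phiv u by rewrite /phiv (trmx_alt J_alt) mulNmx opprK.
have uJu : u *m J *m u^T = 0 by rewrite uJ -trmx_mul phivK trmx0.
have uJuT : phi *m u *m J *m (u^T *m phi^T) = 0.
  by rewrite !mulmxA -(mulmxA phi u J) -(mulmxA phi (u *m J)) uJu mulmx0 mul0mx.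
rewrite linearD /= trmx1 trmx_mul !mulmxDl !mulmxDr !mul1mx !mulmx1 uJuT addr0.
by rewrite mulmxA Ju mulNmx -mulmxA uJ -addrA [- _ + _]addrC.
Qed.

Lemma transv_Sp v l : transv v l \in Sp J.
Proof.
rewrite inE; apply/andP; split; first by case: (mulmx1_unit (transvKN v l)).
by rewrite /transv scalemxAl form_one_add_outer linearZ /= -scalemxAl -scalemxAr subrr addr0.
Qed.

Hypothesis J_unit : J \in unitmx.

Lemma phiv_eq0 v : (phiv v == 0) = (v == 0).
Proof.
apply/idP/idP => [/eqP|/eqP ->]; last by rewrite /phiv linear0 mulmx0.
rewrite /phiv => pv0; rewrite -trmx_eq0 -[v^T](mulKmx (_ : J^T \in unitmx)) ?unitmx_tr //.
by rewrite pv0 mulmx0.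
Qed.

Lemma transv_eq1 v l : v != 0 -> (transv v l == 1%:M) = (l == 0).
Proof.
move=> v0; apply/eqP/eqP => [|->]; last exact: transv0.
move/(congr1 (fun M => M - 1%:M)); rewrite addrC addKr subrr => /eqP.
by rewrite scaler_eq0 (negbTE (outer_neq0 _ v0)) ?phiv_eq0 // orbF => /eqP.
Qed.

Lemma transv_transvs v l : v != 0 -> l != 0 -> transv v l \in transvs J.
Proof.
move=> v0 l0; rewrite inE transv_Sp; apply/existsP; exists v; apply/existsP.
exists (l *: phiv v); apply/and4P; split => //.
- by rewrite scaler_eq0 negb_or l0 phiv_eq0.
- by rewrite -scalemxAr phivK scaler0.
- by rewrite /transv scalemxAl.
Qed.

Lemma transv1_dep a b : b != 0 -> transv a 1 = transv b 1 -> exists k, b = k *: a.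
Proof.
move=> b0 /addrI; rewrite !scale1r => e.
by apply: outer_eq_row (esym e); rewrite phiv_eq0.
Qed.

Lemma Sp_transv_rep s u phi : s \in Sp J -> transv_rep s u phi ->
  exists2 mu, mu != 0 & s = transv u mu.
Proof.
rewrite inE => /andP[_ /eqP sJ] /and4P[u0 phi0 _ /eqP sE].
move: sJ; rewrite sE form_one_add_outer -{2}[J]addr0 => /addrI /eqP.
rewrite subr_eq0 => /eqP e.
have [|k phiE] := outer_eq_col _ e; first by rewrite trmx_eq0 phiv_eq0.
exists k; first by apply: contraNneq phi0 => k0; rewrite phiE k0 scale0r.
by rewrite phiE /transv scalemxAl.
Qed.

Lemma transv_rep_transv v l u phi :
  transv_rep (transv v l) u phi -> phi *m u = (l *: phiv v) *m v.
Proof. by case/and4P => _ _ _ /eqP; rewrite /transv => /addrI <-; apply: scalemxAl. Qed.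

Lemma gedge_transv a b la lb : gedge (transv a la) (transv b lb) -> f a b != 0.
Proof.
case/existsP => u /existsP[phi /existsP[v /existsP[psi /and3P[rep_a rep_b psi_u]]]].
have [_ phi0 _ _] := and4P rep_a; have [v0 _ _ _] := and4P rep_b.
have [k uE] := outer_eq_row phi0 (transv_rep_transv rep_a).
have [k' psiE] := outer_eq_col v0 (transv_rep_transv rep_b).
apply: contra psi_u; rewrite (formv_eq0C J_alt) => /eqP fba.
by rewrite uE psiE -scalemxAl -!scalemxAr mulmx_phiv fba raddf0 !scaler0.
Qed.

End Transvection.

Section TransvectionLength.
Variables (F : finFieldType) (n : nat) (J : 'M[F]_n) (S : {set 'M[F]_n}).
Hypothesis J_alt : forall x, formv J x x = 0.
Local Notation f := (formv J).
Implicit Types a b w : 'rV[F]_n.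

Lemma Tv_conj a g h ka kg kh : g \in Sp J -> h *m g = 1%:M ->
  g \in setpow S kg -> h \in setpow S kh -> Tv J a \subset setpow S ka ->
  Tv J (a *m g) \subset setpow S (kh + ka + kg).
Proof.
move=> gSp hg g_in h_in Ta; apply/subsetP => _ /TvP[l ->].
rewrite -(conj_transv _ _ gSp hg); do 2![apply: mem_setpowD => //].
exact: (subsetP Ta _ (Tv_transv _ _ _)).
Qed.

Lemma Tv_add_direct a b ka kb : Tv J a \subset setpow S ka -> Tv J b \subset setpow S kb ->
  f a b != 0 -> Tv J (a + b) \subset setpow S (kb + ka + kb).
Proof.
move=> Ta Tb fab; have fba : f b a != 0 by rewrite (formv_eq0C J_alt).
have <- : a *m transv J b (f b a)^-1 = a + b by rewrite mulmx_transv mulVf ?scale1r.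
apply: Tv_conj Ta; [exact: transv_Sp | exact: transvNK | |];
  exact: (subsetP Tb _ (Tv_transv _ _ _)).
Qed.

Lemma Tv_add_detour a b w ka kb kw :
  Tv J a \subset setpow S ka -> Tv J b \subset setpow S kb -> Tv J w \subset setpow S kw ->
  f a b = 0 -> f a w != 0 -> f w b != 0 -> f (a + b) w != 0 ->
  Tv J (a + b) \subset setpow S (kw + kb + kw + ka + (kw + kb + kw)).
Proof.
move=> Ta Tb Tw fab faw fwb fabw.
rewrite (formv_eq0C J_alt) in faw; rewrite (formv_eq0C J_alt) in fwb.
rewrite (formv_eq0C J_alt) in fabw.
set l1 := (f w a)^-1; set l2 := (f b w)^-1; set l3 := - (f w (a + b))^-1.
(* [g] moves a to a + w, then to a + w + b, then to a + b; [h] is its inverse. *)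
set g := transv J w l1 *m transv J b l2 *m transv J w l3.
set h := transv J w (- l3) *m transv J b (- l2) *m transv J w (- l1).
have ag : a *m g = a + b.
  have step1 : a *m transv J w l1 = a + w by rewrite mulmx_transv mulVf ?scale1r.
  have step2 : (a + w) *m transv J b l2 = a + w + b.
    rewrite mulmx_transv formvDr (formv_anti J_alt b a) fab oppr0 add0r.
    by rewrite mulVf ?scale1r.
  have step3 : (a + w + b) *m transv J w l3 = a + b.
    have fw : f w (a + w + b) = f w (a + b).
      by rewrite addrAC [LHS]formvDr J_alt addr0.
    by rewrite mulmx_transv fw mulNr mulVf // scaleN1r addrAC addrK.
  by rewrite /g !mulmxA step1 step2 step3.
have hg : h *m g = 1%:M.
  have NK := transvNK J_alt.
  rewrite /h /g -!mulmxA (mulmxA (transv J w (- l1))) NK mul1mx.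
  by rewrite (mulmxA (transv J b (- l2))) NK mul1mx NK.
have in_S v k l : Tv J v \subset setpow S k -> transv J v l \in setpow S k.
  by move=> Tv_sub; apply: (subsetP Tv_sub _ (Tv_transv _ _ _)).
rewrite -ag; apply: Tv_conj Ta.
- by rewrite /g !SpM ?transv_Sp.
- exact: hg.
- by rewrite /g !mem_setpowD ?in_S.
- by rewrite /h !mem_setpowD ?in_S.
Qed.

End TransvectionLength.

Lemma odd_card_two_neq0 (F : finFieldType) : odd #|F| -> (2%:R : F) != 0.
Proof.
move=> oddF; apply/negP => two0.
have F2 : 2%N \in [pchar F] by apply/andP.
have cardF : #|F| = #|pPrimeCharType F2| by [].
move: oddF (card_finNzRing_gt1 F); rewrite cardF card_pprimeChar.
by case: (logn _ _) => [|k] //; rewrite expnS oddM.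
Qed.

Lemma sum_span_sup (F : finFieldType) m k (A B : {set 'M[F]_(m, k)}) :
  (forall v, exists c : 'M[F]_(m, k) -> F, v = \sum_(u in A) c u *: u) -> A \subset B ->
  (forall v, exists c : 'M[F]_(m, k) -> F, v = \sum_(u in B) c u *: u).
Proof.
move=> spanA AB v; have [c ->] := spanA v.
exists (fun u => if u \in A then c u else 0).
rewrite [in RHS](big_setID A) /= (setIidPr AB) [X in _ = _ + X]big1 ?addr0.
  by apply: eq_bigr => u ->.
by move=> u; rewrite !inE => /andP[/negbTE -> _]; rewrite scale0r.
Qed.

Lemma diam_le2_strongly_connected (F : finFieldType) n (Y : {set 'M[F]_n}) :
  diam_le2 Y -> strongly_connected Y.
Proof.
have edge s t : s \in Y -> t \in Y -> gedge s t -> connect (Gamma Y) s t.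
  by move=> sY tY st; apply: connect1; apply/and3P.
move=> diam s t sY tY; case/or3P: (diam s t sY tY) => [/eqP ->|st|].
- exact: connect0.
- exact: edge.
case/existsP => w /and3P[wY sw wt].
by apply: connect_trans (edge _ _ sY wY sw) (edge _ _ wY tY wt).
Qed.

Lemma good_setup_form (F : finFieldType) n (J : 'M[F]_n) X :
  good_setup J X -> (forall x, formv J x x = 0) /\ J \in unitmx.
Proof. by case=> [[_ _ _ []]]. Qed.

Section GoodSetup.
Variables (F : finFieldType) (n : nat) (J : 'M[F]_n) (X : {set 'M[F]_n}).
Hypothesis setup : good_setup J X.
Local Notation f := (formv J).

Let J_alt : forall x, f x x = 0. Proof. exact: (good_setup_form setup).1. Qed.
Let J_unit : J \in unitmx. Proof. exact: (good_setup_form setup).2. Qed.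
Let one_X : 1%:M \in X. Proof. by case: setup => _ [[]]. Qed.
Let X1_transvs : X :\ 1%:M \subset transvs J. Proof. by case: setup => _ [[]]. Qed.
Let X_Fq : Fq_closed X. Proof. by case: setup => _ [[]]. Qed.
Let X_diam (Y : {set 'M[F]_n}) : X :\ 1%:M \subset Y -> Y \subset transvs J -> diam_le2 Y.
Proof. by case: setup => _ [_ [_ _ _]]; apply. Qed.
Let two0 : (2%:R : F) != 0.
Proof. by case: setup => [[oddF _ _ _] _]; apply: odd_card_two_neq0. Qed.

Lemma good_setupU v : v != 0 -> good_setup J (X :|: Tv J v).
Proof.
move: setup => [base [[[XSp Xgen] _ _ _] [spanV spanVs _ diam]]] v0.
have XU : X \subset X :|: Tv J v := subsetUl X _.
have XU1 : X :\ 1%:M \subset (X :|: Tv J v) :\ 1%:M by apply: setSD.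
have XU1_transvs : (X :|: Tv J v) :\ 1%:M \subset transvs J.
  rewrite setDUl subUset X1_transvs; apply/subsetP => t /setD1P[t1 /TvP[l tE]].
  by rewrite tE transv_transvs // -(transv_eq1 J_unit l v0) -tE.
have VXU : VX X \subset VX (X :|: Tv J v).
  apply/subsetP => u; rewrite !inE => /existsP[s /andP[sX rep]].
  by apply/existsP; exists s; rewrite inE sX.
have XVsU : XVs X \subset XVs (X :|: Tv J v).
  apply/subsetP => phi; rewrite !inE => /existsP[s /andP[sX rep]].
  by apply/existsP; exists s; rewrite inE sX.
split=> //; split; split.
- split; last by move=> g /Xgen[k gk]; exists k; apply: (subsetP (setpowS k (symm1S XU))).
  by rewrite subUset XSp; apply/subsetP => _ /TvP[l ->]; apply: transv_Sp.
- by rewrite inE one_X.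
- exact: XU1_transvs.
- move=> s /setUP[sX|/TvP[l ->]] lam lam0; first by rewrite inE X_Fq.
  by rewrite inE /transv addrAC subrr add0r scalerA Tv_transv orbT.
- exact: sum_span_sup spanV VXU.
- exact: sum_span_sup spanVs XVsU.
- by apply: diam_le2_strongly_connected; apply: diam.
- by move=> Y XY YT; apply: diam => //; apply: subset_trans XY.
Qed.

Lemma X_transv_rep s u phi : s \in X -> transv_rep s u phi ->
  exists2 mu, mu != 0 & s = transv J u mu.
Proof.
move=> sX rep; have [u0 phi0 _ /eqP sE] := and4P rep.
have s1 : s != 1%:M.
  apply: contra (outer_neq0 phi0 u0) => /eqP s1.
  by rewrite -(addKr 1%:M (phi *m u)) -sE s1 addNr.
have := subsetP X1_transvs s; rewrite in_setD1 s1 sX inE => /(_ isT) /andP[sSp _].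
exact: (Sp_transv_rep J_alt J_unit sSp rep).
Qed.

Lemma Tv_sub_X_rep s u phi : s \in X -> transv_rep s u phi -> Tv J u \subset X.
Proof.
move=> sX rep; have [mu mu0 sE] := X_transv_rep sX rep.
apply/subsetP => _ /TvP[l ->]; have [->|l0] := eqVneq l 0; first by rewrite transv0.
have := X_Fq sX (mulf_neq0 l0 (invr_neq0 mu0)).
by rewrite sE /transv addrAC subrr add0r scalerA mulfVK.
Qed.

Lemma X_transvP s : s \in X -> s != 1%:M ->
  exists u mu, [/\ mu != 0, s = transv J u mu & Tv J u \subset X].
Proof.
move=> sX s1; have := subsetP X1_transvs s; rewrite in_setD1 s1 sX inE => /(_ isT).
case/andP => _ /existsP[u /existsP[phi rep]]; have [mu mu0 sE] := X_transv_rep sX rep.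
by exists u, mu; split=> //; apply: Tv_sub_X_rep rep.
Qed.

Lemma transv1_X1 v : v != 0 -> Tv J v \subset X -> transv J v 1 \in X :\ 1%:M.
Proof.
move=> v0 TvX; rewrite in_setD1 (transv_eq1 J_unit 1 v0) oner_eq0.
exact: (subsetP TvX _ (Tv_transv _ _ _)).
Qed.

Lemma free_sum_decomposition u : exists s : seq 'rV[F]_n,
  [/\ free s, \sum_(w <- s) w = u, (size s <= n)%N & {in s, forall w, Tv J w \subset X}].
Proof.
have [_ [_ [spanV _ _ _]]] := setup.
have [Y [freeY YV VY]] := exists_free_span (enum (VX X)).
have uY : (u \in <<Y>>)%VS.
  apply: (subvP VY); have [c ->] := spanV u.
  by apply: memv_suml => x x_in; apply/memvZ/memv_span; rewrite mem_enum.
have [k uE _] := free_span freeY uY.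
set s := [seq k x *: x | x <- Y & k x != 0].
have free_s : free s.
  by apply: free_map_scale (filter_free _ freeY) _ => x; rewrite mem_filter => /andP[].
exists s; split=> //.
- rewrite uE big_map big_filter big_mkcond; apply: eq_bigr => x _.
  by case: ifP => // /negbFE/eqP ->; rewrite scale0r.
- by have := dimvS (subvf <<s>>%VS); rewrite (eqnP free_s) dimvf /dimv /= dim_matrix mul1r.
move=> w /mapP[x]; rewrite mem_filter => /andP[kx0 xY] ->; rewrite Tv_scale //.
move: (YV x xY); rewrite mem_enum inE => /existsP[s0 /andP[s0X /existsP[phi0 rep0]]].
exact: (@Tv_sub_X_rep s0 x (phi0 : 'cV[F]_n) s0X rep0).
Qed.

Local Notation S := (symm1 X).

Lemma Tv_sub_setpow1 v : Tv J v \subset X -> Tv J v \subset setpow S 1.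
Proof. by move=> TvX; rewrite setpow1 (subset_trans TvX (sub_symm1 X)). Qed.

Lemma Tv_setpow_le19 k v : Tv J v \subset setpow S k -> (k <= 19)%N -> Tv J v \subset setpow S 19.
Proof. by move=> Tv_sub k19; apply: subset_trans Tv_sub (setpow_leq (symm1_id X) k19). Qed.

Let edge a b la lb : gedge (transv J a la) (transv J b lb) -> f a b != 0.
Proof. exact: gedge_transv. Qed.

Section PairLength.
Variables a b : 'rV[F]_n.
Hypotheses (a0 : a != 0) (ab0 : a + b != 0) (TaX : Tv J a \subset X) (TbX : Tv J b \subset X).
Hypothesis fab : f a b = 0.

Lemma Tv_add_dep k : a + b = k *: a -> Tv J (a + b) \subset setpow S 1.
Proof.
move=> abE; rewrite abE Tv_scale ?Tv_sub_setpow1 //.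
by apply: contraNneq ab0 => k0; rewrite abE k0 scale0r.
Qed.

Lemma Tv_add_two_detours z z' : Tv J z \subset X -> Tv J z' \subset X ->
  f a z != 0 -> f z b != 0 -> f (a + b) z = 0 -> f a z' != 0 -> f z' b = 0 ->
  Tv J (a + b) \subset setpow S 19.
Proof.
move=> TzX Tz'X faz fzb fabz faz' fz'b.
(* a + b = 2a + (b - a): T_(a-b) is reached through z since f(a - b, z) = 2 f(a, z),
   and then T_(a+b) through z' since f(z', b - a) = - f(z', a). *)
have T_amb : Tv J (a - b) \subset setpow S 7.
  have fbz : f b z = - f a z by apply/eqP; rewrite -addr_eq0 addrC -formvDl fabz.
  have Tnb : Tv J (- b) \subset setpow S 1.
    by rewrite -scaleN1r Tv_scale ?oppr_eq0 ?oner_eq0 // Tv_sub_setpow1.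
  apply: (Tv_add_detour J_alt (Tv_sub_setpow1 TaX) Tnb (Tv_sub_setpow1 TzX)) => //.
  - by rewrite formvNr fab oppr0.
  - by rewrite formvNr oppr_eq0.
  - by rewrite formvDl formvNl fbz opprK -mulr2n -mulr_natl mulf_neq0.
have T_bma : Tv J (b - a) \subset setpow S 7.
  by rewrite -opprB -scaleN1r Tv_scale // oppr_eq0 oner_eq0.
have T_2a : Tv J (a + a) \subset setpow S 1.
  by rewrite -mulr2n -scaler_nat Tv_scale ?Tv_sub_setpow1.
have abE : a + b = (a + a) + (b - a) by rewrite addrA addrAC addrK.
have fbz' : f b z' = 0 by rewrite (formv_anti J_alt) fz'b oppr0.
rewrite abE; apply: (Tv_add_detour J_alt T_2a T_bma (Tv_sub_setpow1 Tz'X)).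
- by rewrite formvDl !formvDr !formvNr fab J_alt subrr addr0.
- by rewrite formvDl -mulr2n -mulr_natl mulf_neq0.
- by rewrite formvDr fz'b add0r formvNr oppr_eq0 (formv_eq0C J_alt).
- by rewrite -abE formvDl fbz' addr0.
Qed.

Lemma Tv_add_path2 z : Tv J z \subset X -> f a z != 0 -> f z b != 0 ->
  Tv J (a + b) \subset setpow S 19.
Proof.
move=> TzX faz fzb; have [fabz|fabz] := eqVneq (f (a + b) z) 0; last first.
  have := Tv_add_detour J_alt (Tv_sub_setpow1 TaX) (Tv_sub_setpow1 TbX) (Tv_sub_setpow1 TzX).
  by move=> /(_ fab faz fzb fabz) /Tv_setpow_le19; apply.
(* A path from 1 + a (x) phi_a to 1 + (a + b) (x) phi_(a+b) cannot pass through
   T_(a+b), because f(a, a + b) = 0. *)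
set Y := X :\ 1%:M :|: (Tv J (a + b) :\ 1%:M).
have Y_transvs : Y \subset transvs J.
  rewrite subUset X1_transvs; apply/subsetP => t /setD1P[t1 /TvP[l tE]].
  by rewrite tE transv_transvs // -(transv_eq1 J_unit l ab0) -tE.
have fa_ab : f a (a + b) = 0 by rewrite formvDr J_alt fab add0r.
have aY : transv J a 1 \in Y by rewrite inE transv1_X1.
have abY : transv J (a + b) 1 \in Y.
  by rewrite !inE (transv_eq1 J_unit 1 ab0) oner_eq0 Tv_transv orbT.
case/or3P: (X_diam (subsetUl _ _) Y_transvs aY abY) => [/eqP e|/edge|].
- have [k abE] := transv1_dep J_unit ab0 e.
  exact: Tv_setpow_le19 (Tv_add_dep abE) isT.
- by rewrite fa_ab eqxx.
case/existsP => w /and3P[/setUP[wX1|/setD1P[_ /TvP[l wE]]] aw wab]; last first.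
  by move: aw; rewrite wE => /edge; rewrite fa_ab eqxx.
have [w1 wX] := setD1P wX1; have [z' [mu' [_ wE Tz'X]]] := X_transvP wX w1.
rewrite wE in aw wab; have faz' := edge aw; have fz'ab := edge wab.
have [fz'b|fz'b] := eqVneq (f z' b) 0.
  exact: Tv_add_two_detours TzX Tz'X faz fzb fabz faz' fz'b.
have fabz' : f (a + b) z' != 0 by rewrite (formv_eq0C J_alt).
exact: Tv_setpow_le19 (Tv_add_detour J_alt (Tv_sub_setpow1 TaX) (Tv_sub_setpow1 TbX)
  (Tv_sub_setpow1 Tz'X) fab faz' fz'b fabz') isT.
Qed.

End PairLength.

Lemma Tv_add_19 a b : a != 0 -> b != 0 -> a + b != 0 ->
  Tv J a :|: Tv J b \subset X -> Tv J (a + b) \subset setpow S 19.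
Proof.
move=> a0 b0 ab0; rewrite subUset => /andP[TaX TbX].
have [fab|fab] := eqVneq (f a b) 0; last first.
  exact: Tv_setpow_le19 (Tv_add_direct J_alt (Tv_sub_setpow1 TaX) (Tv_sub_setpow1 TbX) fab) isT.
case/or3P: (X_diam (subxx _) X1_transvs (transv1_X1 a0 TaX) (transv1_X1 b0 TbX)).
- move/eqP => e; have [k bE] := transv1_dep J_unit b0 e.
  have abE : a + b = (1 + k) *: a by rewrite bE scalerDl scale1r.
  exact: Tv_setpow_le19 (Tv_add_dep ab0 TaX abE) isT.
- by move/edge; rewrite fab eqxx.
case/existsP => w /and3P[/setD1P[w1 wX] aw wb].
have [z [mu [_ wE TzX]]] := X_transvP wX w1; rewrite wE in aw wb.
exact: Tv_add_path2 TzX (edge aw) (edge wb).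
Qed.

End GoodSetup.

Section Recursion.
Variables (F : finFieldType) (n : nat) (J : 'M[F]_n) (K : nat).
Hypothesis K_gt0 : (0 < K)%N.
Hypothesis Tv_add_K : forall X, good_setup J X -> forall a b, a != 0 -> b != 0 -> a + b != 0 ->
  Tv J a :|: Tv J b \subset X -> Tv J (a + b) \subset setpow (symm1 X) K.

Lemma Tv_add_setpow X v1 v2 m : good_setup J X -> v1 != 0 -> v2 != 0 -> v1 + v2 != 0 ->
  (0 < m)%N -> Tv J v1 :|: Tv J v2 \subset setpow (symm1 X) m ->
  Tv J (v1 + v2) \subset setpow (symm1 X) (K * m).
Proof.
move=> setup v1_neq0 v2_neq0 v_neq0 m_gt0 T_sub.
have setupT : good_setup J (X :|: (Tv J v1 :|: Tv J v2)).
  by rewrite setUA; apply: good_setupU => //; apply: good_setupU.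
have T_inv : [set invmx t | t in Tv J v1 :|: Tv J v2] \subset Tv J v1 :|: Tv J v2.
  have J_alt := (good_setup_form setup).1.
  by rewrite imsetU; apply: setUSS; apply: invmx_Tv J_alt _.
apply: subset_trans _ (setpowM K (symm1U_setpow m_gt0 T_sub T_inv)).
exact: Tv_add_K setupT _ _ v1_neq0 v2_neq0 v_neq0 (subsetUr _ _).
Qed.

Lemma Tv_sum_free j X (s : seq 'rV[F]_n) : good_setup J X -> free s -> s != [::] ->
  (size s <= 2 ^ j)%N -> {in s, forall w, Tv J w \subset X} ->
  Tv J (\sum_(w <- s) w) \subset setpow (symm1 X) (K ^ j).
Proof.
elim: j X s => [|j IH] X s setup free_s s_nil size_s TsX.
  case: s free_s s_nil size_s TsX => [//|w [|//]] _ _ _ TwX.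
  by rewrite big_seq1 expn0 setpow1 (subset_trans (TwX w (mem_head _ _)) (sub_symm1 X)).
have [small|big] := leqP (size s) (2 ^ j).
  apply: subset_trans (IH X s setup free_s s_nil small TsX) _.
  exact: setpow_leq (symm1_id X) (leq_pexp2l K_gt0 (leqnSn j)).
set s1 := take (2 ^ j) s; set s2 := drop (2 ^ j) s.
have sE : s = s1 ++ s2 by rewrite cat_take_drop.
have free1 : free s1 by apply: (@catl_free _ _ s2); rewrite -sE.
have free2 : free s2 by apply: (@catr_free _ _ s1); rewrite -sE.
have size1 : size s1 = (2 ^ j)%N by rewrite size_take big.
have nil1 : s1 != [::] by rewrite -size_eq0 size1 expn_eq0.
have nil2 : s2 != [::] by rewrite -size_eq0 size_drop subn_eq0 -ltnNge.
have size2 : (size s2 <= 2 ^ j)%N by rewrite size_drop leq_subLR addnn -mul2n -expnS.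
have T1 := IH X s1 setup free1 nil1 (eq_leq size1) (fun w ws => TsX w (mem_take ws)).
have T2 := IH X s2 setup free2 nil2 size2 (fun w ws => TsX w (mem_drop ws)).
have Kj_gt0 : (0 < K ^ j)%N by rewrite expn_gt0 K_gt0.
have sum_neq0 : \sum_(w <- s1) w + \sum_(w <- s2) w != 0.
  by rewrite -big_cat -sE sum_free_neq0.
rewrite {1}sE big_cat expnS.
apply: (Tv_add_setpow setup (sum_free_neq0 free1 nil1) (sum_free_neq0 free2 nil2) sum_neq0 Kj_gt0).
by rewrite subUset T1 T2.
Qed.

Lemma transvs_setpow X j : good_setup J X -> (n <= 2 ^ j)%N ->
  transvs J \subset setpow (symm1 X) (K ^ j).
Proof.
move=> setup n_le; have [J_alt J_unit] := good_setup_form setup.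
apply/subsetP => t; rewrite inE => /andP[tSp /existsP[u /existsP[phi rep]]].
have [mu _ ->] := Sp_transv_rep J_alt J_unit tSp rep; have [u0 _ _ _] := and4P rep.
have [s [free_s sumE size_s TsX]] := free_sum_decomposition setup u.
have s_nil : s != [::] by apply: contra u0 => /eqP s0; rewrite -sumE s0 big_nil.
have := Tv_sum_free setup free_s s_nil (leq_trans size_s n_le) TsX.
by rewrite sumE => /subsetP; apply; apply: Tv_transv.
Qed.

End Recursion.

Lemma ell_transvs_le (F : finFieldType) (n : nat) (J : 'M[F]_n) (X : {set 'M[F]_n}) (c : R) :
  good_setup J X -> Rle 1 c ->
  (forall X' : {set 'M[F]_n}, good_setup J X' -> forall a b, a != 0 -> b != 0 -> a + b != 0 ->
     Tv J a :|: Tv J b \subset X' -> ell_le X' (Tv J (a + b)) c) ->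
  ell_le X (transvs J) (Rmult c (Rpower (INR n) (Rdiv (ln c) (ln (INR 2))))).
Proof.
move=> setup c1 ell_add.
(* Lengths are integers, so only the integer part K of c matters. *)
have [K [Kc K_max]] := nat_floor (Rle_trans _ _ _ Rle_0_1 c1).
have Tv_add_K X' : good_setup J X' -> forall a b, a != 0 -> b != 0 -> a + b != 0 ->
    Tv J a :|: Tv J b \subset X' -> Tv J (a + b) \subset setpow (symm1 X') K.
  move=> setup' a b a0 b0 ab0 TabX; have [k [kc Tk]] := ell_add X' setup' a b a0 b0 ab0 TabX.
  exact: subset_trans Tk (setpow_leq (symm1_id X') (K_max k kc)).
have [[_ _ n4 _] _] := setup.
have n_gt1 : (1 < n)%N by apply: leq_trans n4.
exists (K ^ up_log 2 n)%N; split.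
  apply: INR_expn_le_Rpower Kc c1 _ (ltnW (@up_log_gtn 2 n isT n_gt1)).
  by rewrite up_log_gt0 n_gt1.
exact: transvs_setpow (K_max 1 c1) Tv_add_K _ _ setup (@up_logP 2 n isT).
Qed.

Theorem theorem4p17 (F : finFieldType) (n : nat) (J : 'M[F]_n)
    (X : {set 'M[F]_n}) :
  good_setup J X ->
  (forall c : R, Rle (INR 1) c ->
     (forall (F' : finFieldType) (n' : nat) (J' : 'M[F']_n')
             (X' : {set 'M[F']_n'}) (a b : 'rV[F']_n'),
        good_setup J' X' -> a != 0 -> b != 0 -> a + b != 0 ->
        Tv J' a :|: Tv J' b \subset X' ->
        ell_le X' (Tv J' (a + b)) c) ->
     ell_le X (transvs J)
       (Rmult c (Rpower (INR n) (Rdiv (ln c) (ln (INR 2))))))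
  /\ ell_le X (transvs J)
       (Rmult (INR 21) (Rpower (INR n) (Rdiv (INR 44) (INR 10)))).
Proof.
move=> setup; split=> [c c1 ell_add|].
  by apply: ell_transvs_le setup c1 _ => X' setup' a b; apply: ell_add.
have [[_ _ n4 _] _] := setup.
apply: ell_le_trans _ (Rpower_log2_19_le (leq_trans (isT : (0 < 4)%N) n4)).
apply: ell_transvs_le setup (le_INR 1 19 _) _; first by apply/leP.
move=> X' setup' a b a0 b0 ab0 TabX.
by exists 19%N; split; [apply: Rle_refl | apply: Tv_add_19].
Qed.
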